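(* Let $G$ be a finite group with $d(G) \geq 2$. Then $d(G/\mathrm{Cyc}(G)) = d(G)$.
   Context: For a finite group $H$, $d(H)$ denotes the minimal size of a generating set of $H$. The cycliciser of $G$ is $\mathrm{Cyc}(G) = \{c \in G \mid \langle c,g\rangle \text{ is cyclic for all } g \in G\}$; it is a normal subgroup of $G$. *)

From mathcomp Require Import all_boot all_fingroup all_solvable.
Set Implicit Arguments. Unset Strict Implicit. Unset Printing Implicit Defensive.
Local Open Scope group_scope.

Definition gen_by (gT : finGroupType) (G : {set gT}) (n : nat) : bool :=
  [exists A : {set gT}, (A \subset G) && (#|A| == n) && (<<A>> == G)].

Lemma gen_by_exists (gT : finGroupType) (G : {group gT}) :
  exists n, gen_by G n.
Proof.
exists #|G|; apply/existsP; exists (G : {set gT}).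
by rewrite subxx eqxx /= genGid eqxx.
Qed.

Definition dgen (gT : finGroupType) (G : {group gT}) : nat :=
  ex_minn (gen_by_exists G).

Definition Cyc (gT : finGroupType) (G : {set gT}) : {set gT} :=
  [set c in G | [forall g in G, cyclic <<[set c; g]>>]].

From mathcomp Require Import all_boot all_fingroup all_solvable.

(* Cyc(G) is a cyclic central subgroup <[c]>, and for any g the group <c, g>
   is cyclic, say <[y]>; hence in a generating set {c, a, ...} the two
   generators c and a can be traded for the single generator y.  So a
   generating set of G/Cyc(G) lifts to one of G of the same size, unless it
   is empty, in which case G = Cyc(G) is cyclic and d(G) <= 1. *)

Set Implicit Arguments. Unset Strict Implicit.
Local Open Scope group_scope.

Section TwoGeneratorSubgroups.
Variable gT : finGroupType.
Implicit Types (G H : {group gT}) (x y : gT).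

Lemma mem_gen2l x y : x \in <<[set x; y]>>.
Proof. by rewrite mem_gen // set21. Qed.

Lemma mem_gen2r x y : y \in <<[set x; y]>>.
Proof. by rewrite mem_gen // set22. Qed.

Lemma gen2_subG x y H : (<<[set x; y]>> \subset H) = (x \in H) && (y \in H).
Proof. by rewrite gen_subG subUset !sub1set. Qed.

Lemma cyclic_gen2_in x y H :
  x \in H -> y \in H -> cyclic <<[set x; y]>> ->
  exists2 z, z \in H & <<[set x; y]>> = <[z]>.
Proof.
move=> Hx Hy /cyclicP [z Ez]; exists z => //.
by rewrite -cycle_subG -Ez gen2_subG Hx Hy.
Qed.

Lemma cyclic_of_gen2_cyclic H :
  {in H &, forall x y, cyclic <<[set x; y]>>} -> cyclic H.
Proof.
move=> cycH.
have [c Hc maxc] : exists2 c, c \in H & {in H, forall x, #[x] <= #[c]}.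
  by case: (arg_maxnP (fun x => #[x]) (group1 H)) => c; exists c.
apply/cyclicP; exists c; apply/eqP.
rewrite eqEsubset cycle_subG Hc andbT; apply/subsetP => x Hx.
have [z Hz Ez] := cyclic_gen2_in Hc Hx (cycH c x Hc Hx).
have sCZ : <[c]> \subset <[z]> by rewrite -Ez cycle_subG mem_gen2l.
have -> : <[c]> = <[z]> by apply/eqP; rewrite eqEcard sCZ maxc.
by rewrite -Ez mem_gen2r.
Qed.

Lemma gen_exchange c a y (A : {set gT}) :
  a \in A -> <<[set c; a]>> = <[y]> -> <<c |: A>> = <<y |: A :\ a>>.
Proof.
move=> Aa Ey; have Ea := setD1K Aa.
apply/eqP; rewrite eqEsubset !gen_subG !subUset !sub1set.
have [cy ay] : c \in <[y]> /\ a \in <[y]> by rewrite -Ey mem_gen2l mem_gen2r.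
have sy : <[y]> \subset <<y |: A :\ a>> by rewrite cycle_subG mem_gen ?setU11.
have sAa : A :\ a \subset <<y |: A :\ a>> by apply: subset_trans (joing_subr _ _).
rewrite (subsetP sy c cy) -{1}Ea subUset sub1set (subsetP sy a ay) sAa /=.
have sca : <<[set c; a]>> \subset <<c |: A>>.
  by rewrite gen2_subG mem_gen ?setU11 // mem_gen // setU1r.
rewrite (subsetP sca) ?Ey ?cycle_id //.
by apply: subset_trans (subsetDl A [set a]) _; rewrite sub_gen // subsetUr.
Qed.

End TwoGeneratorSubgroups.

Section CyclicizerProperties.
Variables (gT : finGroupType) (G : {group gT}).

Lemma CycP c :
  reflect (c \in G /\ {in G, forall g, cyclic <<[set c; g]>>}) (c \in Cyc G).
Proof. by rewrite inE; apply: (iffP andP) => -[Gc /forall_inP]. Qed.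

Lemma Cyc_sub : Cyc G \subset G.
Proof. by apply/subsetP => c /CycP []. Qed.

Lemma Cyc_group_set : group_set (Cyc G).
Proof.
apply/group_setP; split.
  apply/CycP; split=> // g Gg; apply/cyclicP; exists g.
  by apply/eqP; rewrite eqEsubset gen2_subG group1 cycle_id cycle_subG mem_gen2r.
move=> c c' /CycP [Gc cycc] /CycP [Gc' cycc']; apply/CycP.
split=> [|g Gg]; first exact: groupM.
have [y Gy Ey] := cyclic_gen2_in Gc Gg (cycc g Gg).
apply: cyclicS (cycc' y Gy); have sy : <[y]> \subset <<[set c'; y]>>.
  by rewrite cycle_subG mem_gen2r.
have [cy gy] : c \in <[y]> /\ g \in <[y]> by rewrite -Ey mem_gen2l mem_gen2r.
by rewrite gen2_subG groupM ?mem_gen2l ?(subsetP sy).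
Qed.

Canonical Cyc_group := Group Cyc_group_set.

Lemma Cyc_center : Cyc G \subset 'Z(G).
Proof.
apply/subsetP => c /CycP [Gc cycc]; apply/centerP; split=> // g Gg.
have /centP cg := subsetP (cyclic_abelian (cycc g Gg)) c (mem_gen2l c g).
exact: cg (mem_gen2r c g).
Qed.

Lemma Cyc_normal : Cyc G <| G.
Proof. exact: sub_center_normal Cyc_center. Qed.

Lemma cyclic_Cyc : cyclic (Cyc G).
Proof.
apply: cyclic_of_gen2_cyclic => c c' /CycP [_ cycc] /CycP [Gc' _].
exact: cycc.
Qed.

End CyclicizerProperties.

Section MinimalGeneration.
Variable gT : finGroupType.
Implicit Types (G H : {group gT}) (A : {set gT}).

Lemma dgen_le_card G A : A \subset G -> <<A>> = G -> dgen G <= #|A|.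
Proof.
move=> sAG genA; rewrite /dgen; case: ex_minnP => m _; apply.
by apply/existsP; exists A; rewrite sAG genA !eqxx.
Qed.

Lemma dgenP G : exists A, [/\ A \subset G, #|A| = dgen G & <<A>> = G].
Proof.
rewrite /dgen; case: ex_minnP => m /existsP [A /andP [/andP [sAG /eqP <-]]].
by move=> /eqP genA _; exists A.
Qed.

Lemma dgen_cyclic G : cyclic G -> dgen G <= 1.
Proof.
case/cyclicP=> g defG; rewrite -(cards1 g).
by apply: dgen_le_card; rewrite ?sub1set defG ?cycle_id.
Qed.

End MinimalGeneration.

Lemma dgen_morphim (gT rT : finGroupType) (D G : {group gT})
    (f : {morphism D >-> rT}) :
  G \subset D -> dgen (f @* G) <= dgen G.
Proof.
move=> sGD; have [A [sAG <- genA]] := dgenP G.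
apply: leq_trans (leq_morphim f A).
apply: dgen_le_card; first exact: morphimS.
by rewrite -morphim_gen ?genA // (subset_trans sAG).
Qed.

Section QuotientGeneration.
Variable gT : finGroupType.
Implicit Types (G H : {group gT}).

Lemma dgen_quotient G H : G \subset 'N(H) -> dgen (G / H) <= dgen G.
Proof. exact: dgen_morphim. Qed.

Lemma quotient_gen_lift G H (B : {set coset_of H}) :
  H <| G -> B \subset G / H -> <<B>> = G / H ->
  exists A : {set gT}, [/\ A \subset G, #|A| <= #|B| & H * <<A>> = G].
Proof.
move=> nsHG sBG genB; have nHG := normal_norm nsHG.
pose A := [set repr b | b : coset_of H in B]; exists A.
have sAN : A \subset 'N(H).
  by apply/subsetP => _ /imsetP [b _ ->]; apply: repr_coset_norm.
have AB : A / H = B.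
  rewrite /quotient morphimEsub // -imset_comp.
  by rewrite (eq_imset _ coset_reprK) imset_id.
have sAG : A \subset G.
  by rewrite -(quotientSGK sAN (normal_sub nsHG)) AB.
split=> //; first exact: leq_imset_card.
apply/eqP; rewrite eqEsubset mul_subG ?gen_subG ?(normal_sub nsHG) //=.
by rewrite -quotientK ?gen_subG // quotient_gen // AB genB (quotientGK nsHG).
Qed.

End QuotientGeneration.

Lemma dgen_Cyc_setU1 (gT : finGroupType) (G : {group gT}) c a (A : {set gT}) :
  c \in Cyc G -> A \subset G -> a \in A -> <<c |: A>> = G -> dgen G <= #|A|.
Proof.
move=> /CycP [Gc cycc] sAG Aa genG; have Ga := subsetP sAG a Aa.
have [y Gy Ey] := cyclic_gen2_in Gc Ga (cycc a Ga).
rewrite (gen_exchange Aa Ey) in genG.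
apply: leq_trans (dgen_le_card _ genG) _.
  by rewrite subUset sub1set Gy (subset_trans (subsetDl _ _)).
by rewrite cardsU1 (cardsD1 a A) Aa leq_add2r leq_b1.
Qed.

Theorem lemma2p3 (gT : finGroupType) (G : {group gT}) :
  2 <= dgen G -> dgen (G / Cyc G)%G = dgen G.
Proof.
move=> d2; apply/eqP; rewrite eqn_leq dgen_quotient ?normal_norm ?Cyc_normal //=.
have [B [sBQ <- genB]] := dgenP (G / Cyc G)%G.
have [A [sAG leAB defG]] := quotient_gen_lift (Cyc_normal G) sBQ genB.
have [c defC] := cyclicP (cyclic_Cyc G).
have Cc : c \in Cyc G by rewrite defC cycle_id.
have sCgen : Cyc G \subset <<c |: A>> by rewrite defC cycle_subG mem_gen ?setU11.
have genG : <<c |: A>> = G.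
  apply/eqP; rewrite eqEsubset gen_subG subUset sub1set (subsetP (Cyc_sub G)) //.
  by rewrite sAG -{1}defG mul_subG ?genS ?subsetUr.
have [A0 | [a Aa]] := set_0Vmem A.
  have cycG : cyclic G by rewrite -genG A0 setU0 cycle_cyclic.
  by have := leq_trans d2 (dgen_cyclic cycG).
exact: leq_trans (dgen_Cyc_setU1 Cc sAG Aa genG) leAB.
Qed.
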